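(* Consider the upper-bound type system, and assume the program is well-typed w.r.t. the signature $\Sigma$ in that system. If $\models E:\Gamma$, $E\vdash e\Downarrow v$, and $\Sigma;\Gamma\vdash^{q}_{q'}e:A$ is derivable in the upper-bound type system, then for all $p,r\in\mathbb Q_{\ge0}$ with $p\ge q+\Phi_E(\Gamma)+r$ there exists $p'\in\mathbb Q_{\ge0}$ such that $E\vdash^{p}_{p'}e\Downarrow v$ and $p'\ge q'+\Phi(v:A)+r$.
   Context: Base types: $T ::= \mathsf{unit}\mid\mathsf{bool}\mid\mathsf{int}\mid L(T)\mid T*T$. Values: $v ::= () \mid \mathsf{true}\mid\mathsf{false}\mid n\ (n\in\mathbb Z)\mid [v_1,\dots,v_n]\ (n\ge 0$, the empty list being $\mathsf{nil})\mid (v_1,v_2)$. Value typing $\models v:T$: $()$ has type $\mathsf{unit}$, booleans have type $\mathsf{bool}$, integers have type $\mathsf{int}$, $(v_1,v_2):T_1*T_2$ if $\models v_i:T_i$, and $[v_1,\dots,v_n]:L(T)$ if every $\models v_i:T$ (so $\mathsf{nil}$ has every list type). Expressions (let-normal form; $x,x_i$ are variables, $f$ function identifiers): $e ::= () \mid \mathsf{true}\mid \mathsf{false}\mid n\mid x\mid \mathrm{op}_\diamond(x_1,x_2)\mid \mathrm{app}(f,x)\mid \mathrm{if}(x,e_t,e_f)\mid \mathrm{let}(x,e_1,x.e_2)\mid \mathrm{pair}(x_1,x_2)\mid \mathrm{match}(x,(x_1,x_2).e)\mid \mathsf{nil}\mid \mathrm{cons}(x_1,x_2)\mid\mathrm{match}(x,e_1,(x_h,x_t).e_2)\mid\mathrm{share}(x,(x_1,x_2).e)$,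 with $\diamond\in\{+,-,*,\mathrm{div},\mathrm{mod},=,<>,<,>,\mathrm{and},\mathrm{or}\}$. A program fixes for each function identifier $f$ a body $e_f$ with a single parameter variable $y^f$. An environment $E$ is a finite map from variables to values. Cost semantics: fix arbitrary rational constants $K^{\mathrm{unit}},K^{\mathrm{bool}},K^{\mathrm{int}},K^{\mathrm{nil}},K^{\mathrm{var}},K^{\mathrm{op}},K^{\mathrm{app}},K^{\mathrm{let}},K^{\mathrm{cond}},K^{\mathrm{pair}},K^{\mathrm{matchP}},K^{\mathrm{cons}},K^{\mathrm{matchN}},K^{\mathrm{matchL}}$. The judgement $E\vdash^{q}_{q'} e\Downarrow v$ (all counters $q,q'$ occurring in derivations are in $\mathbb Q_{\ge0}$) is defined inductively: $E\vdash^{q+K^{c}}_{q}c\Downarrow c$ for constants $c\in\{(),\mathsf{true},\mathsf{false},n,\mathsf{nil}\}$ with the corresponding constant $K^{\mathrm{unit}},K^{\mathrm{bool}},K^{\mathrm{int}},K^{\mathrm{nil}}$; $E\vdash^{q+K^{\mathrm{var}}}_q x\Downarrow E(x)$ for $x\in\mathrm{dom}(E)$; $E\vdash^{q+K^{\mathrm{op}}}_q\mathrm{op}_\diamond(x_1,x_2)\Downarrow E(x_1)\diamond E(x_2)$; $E\vdash^{q+K^{\mathrm{pair}}}_q \mathrm{pair}(x_1,x_2)\Downarrow (E(x_1),E(x_2))$; $E\vdash^{q+K^{\mathrm{cons}}}_q\mathrm{cons}(x_h,x_t)\Downarrow[v_1,\dots,v_n]$ if $E(x_h)=v_1$ and $E(x_t)=[v_2,\dots,v_n]$;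 if $E[y^f\mapsto E(x)]\vdash^q_{q'}e_f\Downarrow v$ then $E\vdash^{q+K^{\mathrm{app}}}_{q'}\mathrm{app}(f,x)\Downarrow v$; if $E\vdash^{q-K^{\mathrm{let}}}_{q_1}e_1\Downarrow v_1$ and $E[x\mapsto v_1]\vdash^{q_1}_{q'}e_2\Downarrow v$ then $E\vdash^q_{q'}\mathrm{let}(x,e_1,x.e_2)\Downarrow v$; if $E(x)=\mathsf{true}$ and $E\vdash^{q-K^{\mathrm{cond}}}_{q'}e_t\Downarrow v$ (resp. $E(x)=\mathsf{false}$ and $E\vdash^{q-K^{\mathrm{cond}}}_{q'}e_f\Downarrow v$) then $E\vdash^q_{q'}\mathrm{if}(x,e_t,e_f)\Downarrow v$; if $E(x)=(v_1,v_2)$ and $E[x_1\mapsto v_1,x_2\mapsto v_2]\vdash^{q-K^{\mathrm{matchP}}}_{q'}e\Downarrow v$ then $E\vdash^q_{q'}\mathrm{match}(x,(x_1,x_2).e)\Downarrow v$; if $E(x)=\mathsf{nil}$ and $E\vdash^{q-K^{\mathrm{matchN}}}_{q'}e_1\Downarrow v$ then $E\vdash^q_{q'}\mathrm{match}(x,e_1,(x_h,x_t).e_2)\Downarrow v$; if $E(x)=[v_1,\dots,v_n]$ with $n\ge1$ and $E[x_h\mapsto v_1,x_t\mapsto[v_2,\dots,v_n]]\vdash^{q-K^{\mathrm{matchL}}}_{q'}e_2\Downarrow v$ then $E\vdash^q_{q'}\mathrm{match}(x,e_1,(x_h,x_t).e_2)\Downarrow v$; if $E(x)=v_1$ and $(E\setminus\{x\})[x_1\mapsto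 v_1,x_2\mapsto v_1]\vdash^q_{q'}e\Downarrow v$ then $E\vdash^q_{q'}\mathrm{share}(x,(x_1,x_2).e)\Downarrow v$. We write $E\vdash e\Downarrow v$ if $E\vdash^q_{q'}e\Downarrow v$ for some $q,q'$. Resource-annotated types: $A ::= \mathsf{unit}\mid\mathsf{bool}\mid\mathsf{int}\mid L^p(A)\mid A*A$ with $p\in\mathbb Q_{\ge0}$; $|A|$ denotes the base type obtained by erasing annotations. An annotated context $\Gamma$ is a finite map from variables to annotated types; $\Gamma_1,\Gamma_2$ denotes the union of contexts with disjoint domains (contexts are unordered). $\models E:\Gamma$ means $\models E(x):|\Gamma(x)|$ for all $x\in\mathrm{dom}(\Gamma)$. Potential: $\Phi(v:A)=0$ for $A\in\{\mathsf{unit},\mathsf{bool},\mathsf{int}\}$; $\Phi((v_1,v_2):A_1*A_2)=\Phi(v_1:A_1)+\Phi(v_2:A_2)$; $\Phi([v_1,\dots,v_n]:L^p(A))=n\cdot p+\sum_{i=1}^n\Phi(v_i:A)$; $\Phi_E(\Gamma)=\sum_{x\in\mathrm{dom}(\Gamma)}\Phi(E(x):\Gamma(x))$. Sharing relation: $\curlyvee(A\mid A,A)$ for $A\in\{\mathsf{unit},\mathsf{bool},\mathsf{int}\}$; $\curlyvee(A*B\mid A_1*B_1,A_2*B_2)$ if $\curlyvee(A\mid A_1,A_2)$ and $\curlyvee(B\mid B_1,B_2)$; $\curlyvee(L^p(A)\mid L^{p_1}(A_1),L^{p_2}(A_2))$ if $\curlyvee(A\mid A_1,A_2)$ and $p=p_1+p_2$.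 Subtyping $\preceq$: $A\preceq A$ for atoms; $L^{p_1}(A_1)\preceq L^{p_2}(A_2)$ if $A_1\preceq A_2$ and $p_1\le p_2$; $A_1*B_1\preceq A_2*B_2$ if $A_1\preceq A_2$ and $B_1\preceq B_2$. A signature $\Sigma$ maps function identifiers to nonempty sets of annotated function types $A_1\xrightarrow{q/q'}A_2$ ($q,q'\in\mathbb Q_{\ge0}$). Typing judgements $\Sigma;\Gamma\vdash^{q}_{q'}e:A$ with $q,q'\in\mathbb Q_{\ge0}$ (every annotation in a rule instance must be a nonnegative rational). Syntax-directed rules: $\Sigma;\emptyset\vdash^{K^{\mathrm{unit}}}_0():\mathsf{unit}$; $\Sigma;\emptyset\vdash^{K^{\mathrm{bool}}}_0 b:\mathsf{bool}$; $\Sigma;\emptyset\vdash^{K^{\mathrm{int}}}_0 n:\mathsf{int}$; $\Sigma;\emptyset\vdash^{K^{\mathrm{nil}}}_0\mathsf{nil}:L^p(A)$; $\Sigma;x:A\vdash^{K^{\mathrm{var}}}_0x:A$; $\Sigma;x_1:\mathsf{bool},x_2:\mathsf{bool}\vdash^{K^{\mathrm{op}}}_0\mathrm{op}_\diamond(x_1,x_2):\mathsf{bool}$ for $\diamond\in\{\mathrm{and},\mathrm{or}\}$; $\Sigma;x_1:\mathsf{int},x_2:\mathsf{int}\vdash^{K^{\mathrm{op}}}_0\mathrm{op}_\diamond(x_1,x_2):\mathsf{bool}$ for comparisons and $:\mathsf{int}$ for $+,-,*,\mathrm{div},\mathrm{mod}$; if $A_1\xrightarrow{q/q'}A_2\in\Sigma(f)$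 then $\Sigma;x:A_1\vdash^{q+K^{\mathrm{app}}}_{q'}\mathrm{app}(f,x):A_2$; from $\Sigma;\Gamma_1\vdash^{q-K^{\mathrm{let}}}_{q_1}e_1:A_1$ and $\Sigma;\Gamma_2,x:A_1\vdash^{q_1}_{q'}e_2:A_2$ infer $\Sigma;\Gamma_1,\Gamma_2\vdash^q_{q'}\mathrm{let}(x,e_1,x.e_2):A_2$; from $\Sigma;\Gamma\vdash^{q-K^{\mathrm{cond}}}_{q'}e_t:A$ and $\Sigma;\Gamma\vdash^{q-K^{\mathrm{cond}}}_{q'}e_f:A$ infer $\Sigma;\Gamma,x:\mathsf{bool}\vdash^q_{q'}\mathrm{if}(x,e_t,e_f):A$; $\Sigma;x_1:A_1,x_2:A_2\vdash^{K^{\mathrm{pair}}}_0\mathrm{pair}(x_1,x_2):A_1*A_2$; from $\Sigma;\Gamma,x_1:A_1,x_2:A_2\vdash^{q-K^{\mathrm{matchP}}}_{q'}e:A$ infer $\Sigma;\Gamma,x:A_1*A_2\vdash^q_{q'}\mathrm{match}(x,(x_1,x_2).e):A$; $\Sigma;x_h:A,x_t:L^p(A)\vdash^{p+K^{\mathrm{cons}}}_0\mathrm{cons}(x_h,x_t):L^p(A)$; from $\Sigma;\Gamma\vdash^{q-K^{\mathrm{matchN}}}_{q'}e_1:B$ and $\Sigma;\Gamma,x_h:A,x_t:L^p(A)\vdash^{q+p-K^{\mathrm{matchL}}}_{q'}e_2:B$ infer $\Sigma;\Gamma,x:L^p(A)\vdash^q_{q'}\mathrm{match}(x,e_1,(x_h,x_t).e_2):B$;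 from $\Sigma;\Gamma,x_1:A_1,x_2:A_2\vdash^q_{q'}e:B$ and $\curlyvee(A\mid A_1,A_2)$ infer $\Sigma;\Gamma,x:A\vdash^q_{q'}\mathrm{share}(x,(x_1,x_2).e):B$. Structural rules of the upper-bound system: (Relax) from $\Sigma;\Gamma\vdash^p_{p'}e:A$, $q\ge p$ and $q-p\ge q'-p'$ infer $\Sigma;\Gamma\vdash^q_{q'}e:A$; (Weakening) from $\Sigma;\Gamma\vdash^q_{q'}e:B$ infer $\Sigma;\Gamma,x:A\vdash^q_{q'}e:B$ for any $A$; (Subtype) from $\Sigma;\Gamma\vdash^q_{q'}e:A$ and $B\preceq A$ infer $\Sigma;\Gamma\vdash^q_{q'}e:B$; (Supertype) from $\Sigma;\Gamma,x:B\vdash^q_{q'}e:C$ and $B\preceq A$ infer $\Sigma;\Gamma,x:A\vdash^q_{q'}e:C$. The program is well-typed w.r.t. $\Sigma$ in this system if for every $f$ and every $A_1\xrightarrow{q/q'}A_2\in\Sigma(f)$, $\Sigma;y^f:A_1\vdash^q_{q'}e_f:A_2$ is derivable. *)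

From HB Require Import structures.
From mathcomp Require Import all_boot all_order all_algebra.
From Stdlib Require Import Permutation.
Set Implicit Arguments. Unset Strict Implicit. Unset Printing Implicit Defensive.
Import Order.TTheory GRing.Theory Num.Theory.
Local Open Scope ring_scope.

Definition var := nat.
Definition fid := nat.

Inductive bty :=
| TUnit | TBool | TInt | TList of bty | TPair of bty & bty.

Inductive value :=
| VUnit
| VBool of bool
| VInt of int
| VList of seq value
| VPair of value & value.

Fixpoint vty (T : bty) (v : value) {struct T} : bool :=
  match T, v with
  | TUnit, VUnit => true
  | TBool, VBool _ => true
  | TInt, VInt _ => true
  | TList T', VList vs => all (vty T') vs
  | TPair T1 T2, VPair v1 v2 => vty T1 v1 && vty T2 v2
  | _, _ => false
  end.

Inductive op :=
| OAdd | OSub | OMul | ODiv | OMod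
| OEq | ONeq | OLt | OGt
| OAnd | OOr.

(* expressions in let-normal form *)
Inductive expr :=
| EUnit
| ETrue
| EFalse
| EInt of int
| EVar of var
| EOp of op & var & var
| EApp of fid & var
| EIf of var & expr & expr
| ELet of var & expr & expr                    (* let(x, e1, x.e2) *)
| EPair of var & var
| EMatchP of var & var & var & expr            (* match(x,(x1,x2).e) *)
| ENil
| ECons of var & var
| EMatchL of var & expr & var & var & expr     (* match(x,e1,(xh,xt).e2) *)
| EShare of var & var & var & expr.            (* share(x,(x1,x2).e) *)

Record fundef := FunDef { fparam : var; fbody : expr }.
Definition prog := fid -> fundef.

(* Environments: finite maps from variables to values, represented as  *)
(* association lists (the most recent binding shadows older ones).     *)

Definition env := seq (var * value).

Fixpoint lookup (E : env) (x : var) : option value :=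
  match E with
  | [::] => None
  | (y, w) :: E' => if y == x then Some w else lookup E' x
  end.

Definition upd (E : env) (x : var) (v : value) : env := (x, v) :: E.
Definition rem_var (E : env) (x : var) : env := [seq yw <- E | yw.1 != x].

Definition op_sem (o : op) (v1 v2 : value) : option value :=
  match o, v1, v2 with
  | OAdd, VInt m, VInt n => Some (VInt (m + n))
  | OSub, VInt m, VInt n => Some (VInt (m - n))
  | OMul, VInt m, VInt n => Some (VInt (m * n))
  | ODiv, VInt m, VInt n => if n == 0 then None else Some (VInt (m %/ n)%Z)
  | OMod, VInt m, VInt n => if n == 0 then None else Some (VInt (m %% n)%Z)
  | OEq, VInt m, VInt n => Some (VBool (m == n))
  | ONeq, VInt m, VInt n => Some (VBool (m != n))
  | OLt, VInt m, VInt n => Some (VBool (m < n))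
  | OGt, VInt m, VInt n => Some (VBool (m > n))
  | OAnd, VBool a, VBool b => Some (VBool (a && b))
  | OOr, VBool a, VBool b => Some (VBool (a || b))
  | _, _, _ => None
  end.

Record costs := Costs {
  Kunit : rat; Kbool : rat; Kint : rat; Knil : rat; Kvar : rat; Kop : rat;
  Kapp : rat; Klet : rat; Kcond : rat; Kpair : rat; KmatchP : rat;
  Kcons : rat; KmatchN : rat; KmatchL : rat }.

Section Eval.
Variables (K : costs) (P : prog).

Inductive eval : env -> rat -> rat -> expr -> value -> Prop :=
| Ev_unit E q :
    0 <= q + Kunit K -> 0 <= q ->
    eval E (q + Kunit K) q EUnit VUnit
| Ev_true E q :
    0 <= q + Kbool K -> 0 <= q ->
    eval E (q + Kbool K) q ETrue (VBool true)
| Ev_false E q :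
    0 <= q + Kbool K -> 0 <= q ->
    eval E (q + Kbool K) q EFalse (VBool false)
| Ev_int E q n :
    0 <= q + Kint K -> 0 <= q ->
    eval E (q + Kint K) q (EInt n) (VInt n)
| Ev_nil E q :
    0 <= q + Knil K -> 0 <= q ->
    eval E (q + Knil K) q ENil (VList [::])
| Ev_var E q x v :
    0 <= q + Kvar K -> 0 <= q ->
    lookup E x = Some v ->
    eval E (q + Kvar K) q (EVar x) v
| Ev_op E q o x1 x2 v1 v2 v :
    0 <= q + Kop K -> 0 <= q ->
    lookup E x1 = Some v1 -> lookup E x2 = Some v2 -> op_sem o v1 v2 = Some v ->
    eval E (q + Kop K) q (EOp o x1 x2) v
| Ev_pair E q x1 x2 v1 v2 :
    0 <= q + Kpair K -> 0 <= q ->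
    lookup E x1 = Some v1 -> lookup E x2 = Some v2 ->
    eval E (q + Kpair K) q (EPair x1 x2) (VPair v1 v2)
| Ev_cons E q xh xt v1 vs :
    0 <= q + Kcons K -> 0 <= q ->
    lookup E xh = Some v1 -> lookup E xt = Some (VList vs) ->
    eval E (q + Kcons K) q (ECons xh xt) (VList (v1 :: vs))
| Ev_app E q q' f x vx v :
    0 <= q + Kapp K -> 0 <= q' ->
    lookup E x = Some vx ->
    eval (upd E (fparam (P f)) vx) q q' (fbody (P f)) v ->
    eval E (q + Kapp K) q' (EApp f x) v
| Ev_let E q q1 q' x e1 e2 v1 v :
    0 <= q -> 0 <= q' ->
    eval E (q - Klet K) q1 e1 v1 ->
    eval (upd E x v1) q1 q' e2 v ->
    eval E q q' (ELet x e1 e2) v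
| Ev_if_true E q q' x et ef v :
    0 <= q -> 0 <= q' ->
    lookup E x = Some (VBool true) ->
    eval E (q - Kcond K) q' et v ->
    eval E q q' (EIf x et ef) v
| Ev_if_false E q q' x et ef v :
    0 <= q -> 0 <= q' ->
    lookup E x = Some (VBool false) ->
    eval E (q - Kcond K) q' ef v ->
    eval E q q' (EIf x et ef) v
| Ev_matchP E q q' x x1 x2 e v1 v2 v :
    0 <= q -> 0 <= q' ->
    lookup E x = Some (VPair v1 v2) ->
    eval (upd (upd E x1 v1) x2 v2) (q - KmatchP K) q' e v ->
    eval E q q' (EMatchP x x1 x2 e) v
| Ev_matchN E q q' x e1 xh xt e2 v :
    0 <= q -> 0 <= q' ->
    lookup E x = Some (VList [::]) ->
    eval E (q - KmatchN K) q' e1 v ->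
    eval E q q' (EMatchL x e1 xh xt e2) v
| Ev_matchL E q q' x e1 xh xt e2 v1 vs v :
    0 <= q -> 0 <= q' ->
    lookup E x = Some (VList (v1 :: vs)) ->
    eval (upd (upd E xh v1) xt (VList vs)) (q - KmatchL K) q' e2 v ->
    eval E q q' (EMatchL x e1 xh xt e2) v
| Ev_share E q q' x x1 x2 e v1 v :
    0 <= q -> 0 <= q' ->
    lookup E x = Some v1 ->
    eval (upd (upd (rem_var E x) x1 v1) x2 v1) q q' e v ->
    eval E q q' (EShare x x1 x2 e) v.

End Eval.

Definition evaluates (K : costs) (P : prog) (E : env) (e : expr) (v : value) :=
  exists q q', eval K P E q q' e v.

Inductive aty :=
| AUnit | ABool | AInt | AList of rat & aty | APair of aty & aty.

Fixpoint erase (A : aty) : bty :=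
  match A with
  | AUnit => TUnit | ABool => TBool | AInt => TInt
  | AList _ B => TList (erase B)
  | APair A1 A2 => TPair (erase A1) (erase A2)
  end.

Fixpoint ann_nonneg (A : aty) : bool :=
  match A with
  | AList p B => (0 <= p) && ann_nonneg B
  | APair A1 A2 => ann_nonneg A1 && ann_nonneg A2
  | _ => true
  end.

(* potential  Phi(v : A)  (0 on ill-typed combinations, which never arise) *)
Fixpoint pot (A : aty) (v : value) {struct A} : rat :=
  match A, v with
  | AList p B, VList vs => (size vs)%:R * p + \sum_(w <- vs) pot B w
  | APair A1 A2, VPair v1 v2 => pot A1 v1 + pot A2 v2
  | _, _ => 0
  end.

(* annotated contexts: finite maps from variables to annotated types,
   represented as lists with pairwise distinct variables; contexts are
   unordered, so rules are stated up to permutation. *)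
Definition ctx := seq (var * aty).

Definition ctx_wf (G : ctx) : bool :=
  uniq (map fst G) && all (fun xa => ann_nonneg xa.2) G.

Definition env_typed (E : env) (G : ctx) : Prop :=
  forall xa, List.In xa G ->
  exists v, lookup E xa.1 = Some v /\ vty (erase xa.2) v.

Definition potE (E : env) (G : ctx) : rat :=
  \sum_(xa <- G) match lookup E xa.1 with Some v => pot xa.2 v | None => 0 end.

Inductive share_rel : aty -> aty -> aty -> Prop :=
| Sh_unit : share_rel AUnit AUnit AUnit
| Sh_bool : share_rel ABool ABool ABool
| Sh_int : share_rel AInt AInt AInt
| Sh_pair A B A1 B1 A2 B2 :
    share_rel A A1 A2 -> share_rel B B1 B2 ->
    share_rel (APair A B) (APair A1 B1) (APair A2 B2)
| Sh_list p p1 p2 A A1 A2 :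
    share_rel A A1 A2 -> p = p1 + p2 ->
    share_rel (AList p A) (AList p1 A1) (AList p2 A2).

Inductive subty : aty -> aty -> Prop :=
| Sub_unit : subty AUnit AUnit
| Sub_bool : subty ABool ABool
| Sub_int : subty AInt AInt
| Sub_list p1 p2 A1 A2 : subty A1 A2 -> p1 <= p2 -> subty (AList p1 A1) (AList p2 A2)
| Sub_pair A1 B1 A2 B2 : subty A1 A2 -> subty B1 B2 ->
    subty (APair A1 B1) (APair A2 B2).

Record fty := FTy { farg : aty; fq : rat; fq' : rat; fres : aty }.

Definition signature := fid -> fty -> Prop.

Definition sig_wf (S : signature) : Prop :=
  forall f, (exists ft, S f ft) /\
    forall ft, S f ft -> 0 <= fq ft /\ 0 <= fq' ft /\
                         ann_nonneg (farg ft) /\ ann_nonneg (fres ft).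

(* Every judgement in a derivation has nonnegative counters, a          *)
(* well-formed context and nonnegative annotations (jwf).               *)

Definition jwf (G : ctx) (q q' : rat) (A : aty) : Prop :=
  [/\ 0 <= q, 0 <= q', ctx_wf G & ann_nonneg A].

Definition arith_op (o : op) : bool :=
  match o with OAdd | OSub | OMul | ODiv | OMod => true | _ => false end.
Definition cmp_op (o : op) : bool :=
  match o with OEq | ONeq | OLt | OGt => true | _ => false end.
Definition bool_op (o : op) : bool :=
  match o with OAnd | OOr => true | _ => false end.

Section Typing.
Variables (K : costs) (S : signature).

Inductive typ : ctx -> rat -> rat -> expr -> aty -> Prop :=
| T_unit :
    jwf [::] (Kunit K) 0 AUnit -> typ [::] (Kunit K) 0 EUnit AUnit
| T_true :
    jwf [::] (Kbool K) 0 ABool -> typ [::] (Kbool K) 0 ETrue ABool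
| T_false :
    jwf [::] (Kbool K) 0 ABool -> typ [::] (Kbool K) 0 EFalse ABool
| T_int n :
    jwf [::] (Kint K) 0 AInt -> typ [::] (Kint K) 0 (EInt n) AInt
| T_nil p A :
    jwf [::] (Knil K) 0 (AList p A) -> typ [::] (Knil K) 0 ENil (AList p A)
| T_var x A :
    jwf [:: (x, A)] (Kvar K) 0 A -> typ [:: (x, A)] (Kvar K) 0 (EVar x) A
| T_opB o x1 x2 : bool_op o ->
    jwf [:: (x1, ABool); (x2, ABool)] (Kop K) 0 ABool ->
    typ [:: (x1, ABool); (x2, ABool)] (Kop K) 0 (EOp o x1 x2) ABool
| T_opC o x1 x2 : cmp_op o ->
    jwf [:: (x1, AInt); (x2, AInt)] (Kop K) 0 ABool ->
    typ [:: (x1, AInt); (x2, AInt)] (Kop K) 0 (EOp o x1 x2) ABool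
| T_opA o x1 x2 : arith_op o ->
    jwf [:: (x1, AInt); (x2, AInt)] (Kop K) 0 AInt ->
    typ [:: (x1, AInt); (x2, AInt)] (Kop K) 0 (EOp o x1 x2) AInt
| T_app f x ft : S f ft ->
    jwf [:: (x, farg ft)] (fq ft + Kapp K) (fq' ft) (fres ft) ->
    typ [:: (x, farg ft)] (fq ft + Kapp K) (fq' ft) (EApp f x) (fres ft)
| T_let G G1 G2 q q1 q' x e1 e2 A1 A2 :
    jwf G q q' A2 -> Permutation G (G1 ++ G2) ->
    typ G1 (q - Klet K) q1 e1 A1 ->
    typ ((x, A1) :: G2) q1 q' e2 A2 ->
    typ G q q' (ELet x e1 e2) A2
| T_if G G0 q q' x et ef A :
    jwf G q q' A -> Permutation G ((x, ABool) :: G0) ->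
    typ G0 (q - Kcond K) q' et A ->
    typ G0 (q - Kcond K) q' ef A ->
    typ G q q' (EIf x et ef) A
| T_pair x1 x2 A1 A2 :
    jwf [:: (x1, A1); (x2, A2)] (Kpair K) 0 (APair A1 A2) ->
    typ [:: (x1, A1); (x2, A2)] (Kpair K) 0 (EPair x1 x2) (APair A1 A2)
| T_matchP G G0 q q' x x1 x2 e A1 A2 A :
    jwf G q q' A -> Permutation G ((x, APair A1 A2) :: G0) ->
    typ ((x1, A1) :: (x2, A2) :: G0) (q - KmatchP K) q' e A ->
    typ G q q' (EMatchP x x1 x2 e) A
| T_cons xh xt p A :
    jwf [:: (xh, A); (xt, AList p A)] (p + Kcons K) 0 (AList p A) ->
    typ [:: (xh, A); (xt, AList p A)] (p + Kcons K) 0 (ECons xh xt) (AList p A)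
| T_matchL G G0 q q' x e1 xh xt e2 p A B :
    jwf G q q' B -> Permutation G ((x, AList p A) :: G0) ->
    typ G0 (q - KmatchN K) q' e1 B ->
    typ ((xh, A) :: (xt, AList p A) :: G0) (q + p - KmatchL K) q' e2 B ->
    typ G q q' (EMatchL x e1 xh xt e2) B
| T_share G G0 q q' x x1 x2 e A A1 A2 B :
    jwf G q q' B -> Permutation G ((x, A) :: G0) ->
    typ ((x1, A1) :: (x2, A2) :: G0) q q' e B ->
    share_rel A A1 A2 ->
    typ G q q' (EShare x x1 x2 e) B
| T_relax G p p' q q' e A :
    jwf G q q' A ->
    typ G p p' e A -> p <= q -> q' - p' <= q - p ->
    typ G q q' e A
| T_weak G G0 q q' e x A B :
    jwf G q q' B -> Permutation G ((x, A) :: G0) ->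
    typ G0 q q' e B ->
    typ G q q' e B
| T_sub G q q' e A B :
    jwf G q q' B ->
    typ G q q' e A -> subty B A ->
    typ G q q' e B
| T_super G G0 q q' e x A B C :
    jwf G q q' C -> Permutation G ((x, A) :: G0) ->
    typ ((x, B) :: G0) q q' e C -> subty B A ->
    typ G q q' e C.

End Typing.

Definition prog_typed (K : costs) (P : prog) (S : signature) : Prop :=
  forall f ft, S f ft ->
    typ K S [:: (fparam (P f), farg ft)] (fq ft) (fq' ft) (fbody (P f)) (fres ft).

(* The bound is proved by induction on the evaluation derivation (the typing
   of a function body comes from the signature, not from a subderivation),
   with an inner induction on the typing derivation.  The structural rules only
   move potential between the context, the counters and the slack [r], so they
   are discharged once and for all; each syntax-directed rule is then matched
   with its evaluation rule.  The invariant is strengthened to record that the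
   result value has the erased result type, so that the potential of every
   variable bound later on is that of a well-typed value. *)

From HB Require Import structures.
From mathcomp Require Import all_boot all_order all_algebra.
From Stdlib Require Import Permutation.
From mathcomp Require Import ring lra.
Import Order.TTheory GRing.Theory Num.Theory.
Local Open Scope ring_scope.
Set Implicit Arguments. Unset Strict Implicit.

Lemma Permutation_perm_eq (T : eqType) (s t : seq T) :
  Permutation s t -> perm_eq s t.
Proof.
elim=> [|x s1 t1 _ IH|x y s1|s1 s2 s3 _ IH1 _ IH2] //.
- by rewrite perm_cons.
- by rewrite (perm_catCA [:: y] [:: x]).
- exact: seq.perm_trans IH1 IH2.
Qed.

Lemma big_Permutation (R : Type) (idx : R) (op : Monoid.com_law idx)
    (I : Type) (F : I -> R) (s t : seq I) :
  Permutation s t -> \big[op/idx]_(i <- s) F i = \big[op/idx]_(i <- t) F i.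
Proof.
elim=> [|i s1 t1 _ IH|i j s1|s1 s2 s3 _ -> //] //; rewrite !big_cons ?IH //.
exact: Monoid.mulmCA.
Qed.

Lemma all_In (T : Type) (a : pred T) (s : seq T) (x : T) :
  all a s -> List.In x s -> a x.
Proof. by elim: s => //= y s IH /andP[ay /IH ax] [<-|/ax]. Qed.

Lemma In_map (T : Type) (U : eqType) (f : T -> U) (s : seq T) (x : T) :
  List.In x s -> f x \in map f s.
Proof.
by elim: s => //= y s IH [->|/IH]; rewrite in_cons ?eqxx // => ->; rewrite orbT.
Qed.

Lemma pot_ge0 A v : ann_nonneg A -> 0 <= pot A v.
Proof.
elim: A v => [| | |p B IH|A1 IH1 A2 IH2] [|b|n|vs|v1 v2] //=.
- move=> /andP[p_ge0 B_ge0]; rewrite addr_ge0 ?mulr_ge0 //.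
  by apply: sumr_ge0 => w _; apply: IH.
- by move=> /andP[A1_ge0 A2_ge0]; rewrite addr_ge0 ?IH1 ?IH2.
Qed.

Lemma pot_subty B A v : subty B A -> pot B v <= pot A v.
Proof.
move=> BA; elim: BA v => [| | |p1 p2 A1 A2 _ IH p12|A1 B1 A2 B2 _ IH1 _ IH2]
  [|b|n|vs|v1 v2] //=.
- by rewrite lerD ?ler_wpM2l // ler_sum.
- by rewrite lerD.
Qed.

Lemma erase_subty B A : subty B A -> erase B = erase A.
Proof. by elim=> //= [p1 p2 C1 C2 _ -> _|C1 D1 C2 D2 _ -> _ ->]. Qed.

Lemma pot_share A A1 A2 v : share_rel A A1 A2 -> pot A v = pot A1 v + pot A2 v.
Proof.
move=> sh; elim: sh v => [| | |C D C1 D1 C2 D2 _ IH1 _ IH2|p p1 p2 C C1 C2 _ IH ->]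
  [|b|n|vs|v1 v2] //=; rewrite ?addr0 //.
- by rewrite IH1 IH2 addrACA.
- by rewrite (eq_bigr _ (fun w _ => IH w)) big_split /=; ring.
Qed.

Lemma erase_share A A1 A2 :
  share_rel A A1 A2 -> erase A1 = erase A /\ erase A2 = erase A.
Proof.
by elim=> //= [C D C1 D1 C2 D2 _ [-> ->] _ [-> ->]|p p1 p2 C C1 C2 _ [-> ->] _].
Qed.

Lemma lookup_rem_var E x y : y != x -> lookup (rem_var E x) y = lookup E y.
Proof.
move=> yx; elim: E => [|[z w] E IH] //=.
by case: (eqVneq z x) => [->|zx] /=; rewrite ?(negbTE yx) ?IH // eq_sym (negbTE yx).
Qed.

Definition agree_on (G : ctx) (E1 E2 : env) :=
  forall xa, List.In xa G -> lookup E1 xa.1 = lookup E2 xa.1.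

Lemma agree_on_refl G E : agree_on G E E.
Proof. by []. Qed.

Lemma agree_on_upd G E x w : x \notin map fst G -> agree_on G (upd E x w) E.
Proof.
move=> xG xa /(In_map fst) xaG /=; case: eqP => // ex.
by rewrite ex xaG in xG.
Qed.

Lemma agree_on_rem_var G E x : x \notin map fst G -> agree_on G (rem_var E x) E.
Proof.
move=> xG xa /(In_map fst) xaG; apply: lookup_rem_var.
by apply: contraNneq xG => <-.
Qed.

Lemma potE_cons E x A G w :
  lookup E x = Some w -> potE E ((x, A) :: G) = pot A w + potE E G.
Proof. by move=> xw; rewrite /potE big_cons /= xw. Qed.

Lemma potE_cat E G1 G2 : potE E (G1 ++ G2) = potE E G1 + potE E G2.
Proof. by rewrite /potE big_cat. Qed.

Lemma potE_perm E G H : Permutation G H -> potE E G = potE E H.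
Proof. exact: big_Permutation. Qed.

Lemma potE_ge0 E G : all (fun xa => ann_nonneg xa.2) G -> 0 <= potE E G.
Proof.
rewrite /potE; elim: G => [|[x A] G IH] /=; first by rewrite big_nil.
move=> /andP[A_ge0 /IH G_ge0]; rewrite big_cons addr_ge0 //.
by case: lookup => // w; apply: pot_ge0.
Qed.

Lemma potE_agree E1 E2 G : agree_on G E1 E2 -> potE E1 G = potE E2 G.
Proof.
rewrite /potE; elim: G => [|xa G IH] agr; first by rewrite !big_nil.
by rewrite !big_cons agr /= ?IH // => [ya ?|]; [apply: agr; right | left].
Qed.

Lemma env_typed_perm E G H : Permutation G H -> env_typed E G -> env_typed E H.
Proof. by move=> GH EG xa /(Permutation_in _ (Permutation_sym GH)); apply: EG. Qed.

Lemma env_typed_cat E G1 G2 :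
  env_typed E (G1 ++ G2) -> env_typed E G1 /\ env_typed E G2.
Proof. by move=> EG; split=> xa xaG; apply: EG; apply: List.in_or_app; [left|right]. Qed.

Lemma env_typed_cons E x A G w :
  lookup E x = Some w -> vty (erase A) w -> env_typed E G ->
  env_typed E ((x, A) :: G).
Proof. by move=> xw wA EG ya [<-|/EG]; first by exists w. Qed.

Lemma env_typed_behead E xa G : env_typed E (xa :: G) -> env_typed E G.
Proof. by move=> EG ya yaG; apply: EG; right. Qed.

Lemma env_typed_head E x A G :
  env_typed E ((x, A) :: G) -> exists w, lookup E x = Some w /\ vty (erase A) w.
Proof. by move=> EG; apply: (EG (x, A)); left. Qed.

Lemma env_typed_lookup E x A G w :
  env_typed E ((x, A) :: G) -> lookup E x = Some w -> vty (erase A) w.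
Proof. by move=> /env_typed_head[w' [-> wA]] [<-]. Qed.

Lemma env_typed_agree E1 E2 G : agree_on G E1 E2 -> env_typed E2 G -> env_typed E1 G.
Proof. by move=> agr EG xa xaG; rewrite agr //; apply: EG. Qed.

Lemma env_typed_upd E x A G w :
  x \notin map fst G -> vty (erase A) w -> env_typed E G ->
  env_typed (upd E x w) ((x, A) :: G).
Proof.
move=> xG wA EG; apply: env_typed_cons wA _; first by rewrite /= eqxx.
exact: env_typed_agree (agree_on_upd _ _ xG) EG.
Qed.

Lemma potE_upd E x A G w :
  x \notin map fst G -> potE (upd E x w) ((x, A) :: G) = pot A w + potE E G.
Proof.
move=> xG; rewrite (potE_cons _ _ (w := w)) /= ?eqxx //.
by rewrite (potE_agree (agree_on_upd _ _ xG)).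
Qed.

Lemma env_typed_upd2 E0 E x1 x2 A1 A2 G w1 w2 :
  uniq (map fst ((x1, A1) :: (x2, A2) :: G)) -> agree_on G E0 E ->
  vty (erase A1) w1 -> vty (erase A2) w2 -> env_typed E G ->
  env_typed (upd (upd E0 x1 w1) x2 w2) ((x1, A1) :: (x2, A2) :: G).
Proof.
rewrite /= inE negb_or => /and3P[/andP[x12 x1G] x2G _] agr w1A1 w2A2 EG.
apply: env_typed_perm (perm_swap _ _ _) _.
apply: env_typed_upd w2A2 _; first by rewrite /= inE negb_or eq_sym x12.
exact: env_typed_upd w1A1 (env_typed_agree agr EG).
Qed.

Lemma potE_upd2 E0 E x1 x2 A1 A2 G w1 w2 :
  uniq (map fst ((x1, A1) :: (x2, A2) :: G)) -> agree_on G E0 E ->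
  potE (upd (upd E0 x1 w1) x2 w2) ((x1, A1) :: (x2, A2) :: G) =
  pot A1 w1 + pot A2 w2 + potE E G.
Proof.
rewrite /= inE negb_or => /and3P[/andP[x12 x1G] x2G _] agr.
rewrite (potE_perm _ (perm_swap _ _ _)) potE_upd /= ?inE ?negb_or 1?eq_sym ?x12 //.
by rewrite potE_upd // (potE_agree agr) addrCA addrA.
Qed.

Lemma bool_op_vty o v1 v2 v :
  bool_op o -> op_sem o v1 v2 = Some v -> vty TBool v1 -> vty TBool v2 -> vty TBool v.
Proof. by case: o => //= _; case: v1 => // b1; case: v2 => // b2 [<-]. Qed.

Lemma cmp_op_vty o v1 v2 v :
  cmp_op o -> op_sem o v1 v2 = Some v -> vty TInt v1 -> vty TInt v2 -> vty TBool v.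
Proof. by case: o => //= _; case: v1 => // n1; case: v2 => // n2 [<-]. Qed.

Lemma arith_op_vty o v1 v2 v :
  arith_op o -> op_sem o v1 v2 = Some v -> vty TInt v1 -> vty TInt v2 -> vty TInt v.
Proof.
by case: o => //= _; case: v1 => // n1; case: v2 => // n2; try case: ifP => _ //; case=> <-.
Qed.

Section Soundness.
Variables (K : costs) (P : prog) (S : signature).

Lemma eval_ge0 E p p' e v : eval K P E p p' e v -> 0 <= p'.
Proof. by case. Qed.

Lemma typ_jwf G q q' e A : typ K S G q q' e A -> jwf G q q' A.
Proof. by case. Qed.

Lemma typ_ctx_wf G q q' e A : typ K S G q q' e A -> ctx_wf G.
Proof. by move=> /typ_jwf[]. Qed.

Definition sound_bound E G q q' e v A :=
  env_typed E G -> forall p r, 0 <= r -> q + potE E G + r <= p ->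
  exists p', [/\ eval K P E p p' e v, q' + pot A v + r <= p' & vty (erase A) v].

Lemma budget_ge0 E G q q' A p r :
  jwf G q q' A -> 0 <= r -> q + potE E G + r <= p -> 0 <= p.
Proof. by case=> q_ge0 _ /andP[_ /(potE_ge0 E) G_ge0] _ r_ge0 budget; lra. Qed.

Lemma sound_bound_relax E G p0 p0' q q' e v A :
  sound_bound E G p0 p0' e v A -> p0 <= q -> q' - p0' <= q - p0 ->
  sound_bound E G q q' e v A.
Proof.
move=> H p0q slack EG p r r_ge0 budget.
have [||p' [ev bound vA]] := H EG p (r + (q - p0)); try lra.
by exists p'; split=> //; lra.
Qed.

Lemma sound_bound_weaken E G G0 q q' e v x A B :
  ctx_wf G -> Permutation G ((x, A) :: G0) ->
  sound_bound E G0 q q' e v B -> sound_bound E G q q' e v B.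
Proof.
move=> /andP[_ G_ge0] GG0 H EG p r r_ge0.
have A_ge0 : ann_nonneg A.
  exact: all_In G_ge0 (Permutation_in _ (Permutation_sym GG0) (List.in_eq _ _)).
have EG' := env_typed_perm GG0 EG.
have [w [xw _]] := env_typed_head EG'.
rewrite (potE_perm E GG0) (potE_cons _ _ xw) => budget.
have w_ge0 := pot_ge0 w A_ge0.
have [||p' [ev bound vB]] := H (env_typed_behead EG') p (r + pot A w); try lra.
by exists p'; split=> //; lra.
Qed.

Lemma sound_bound_subty E G q q' e v A B :
  sound_bound E G q q' e v A -> subty B A -> sound_bound E G q q' e v B.
Proof.
move=> H BA EG p r r_ge0 budget.
have [p' [ev bound vA]] := H EG p r r_ge0 budget.
have BA_v := pot_subty v BA.
by exists p'; split; rewrite ?(erase_subty BA) //; lra.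
Qed.

Lemma sound_bound_supty E G G0 q q' e v x A B C :
  Permutation G ((x, A) :: G0) -> subty B A ->
  sound_bound E ((x, B) :: G0) q q' e v C -> sound_bound E G q q' e v C.
Proof.
move=> GG0 BA H EG p r r_ge0.
have EG' := env_typed_perm GG0 EG.
have [w [xw wA]] := env_typed_head EG'.
rewrite (potE_perm E GG0) (potE_cons _ _ xw) => budget.
have BA_w := pot_subty w BA.
have EG'' : env_typed E ((x, B) :: G0).
  by apply: env_typed_cons xw _ (env_typed_behead EG'); rewrite (erase_subty BA).
have [||p' [ev bound vC]] := H EG'' p (r + (pot A w - pot B w)); try lra.
  by rewrite (potE_cons _ _ xw); lra.
by exists p'; split=> //; lra.
Qed.

Lemma sound_bound_leaf E G q c e v A :
  jwf G q 0 A ->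
  (forall t, 0 <= t + c -> 0 <= t -> eval K P E (t + c) t e v) ->
  (env_typed E G -> vty (erase A) v /\ pot A v + c <= q + potE E G) ->
  sound_bound E G q 0 e v A.
Proof.
move=> wf ev vA EG p r r_ge0 budget.
have p_ge0 := budget_ge0 wf r_ge0 budget.
have [vA' pot_le] := vA EG.
have v_ge0 : 0 <= pot A v by case: wf => _ _ _ A_ge0; apply: pot_ge0.
exists (p - c); split=> //; last lra.
by rewrite -{1}(subrK c p); apply: ev; rewrite ?subrK //; lra.
Qed.

Lemma sound_bound_const E c e v A :
  jwf [::] c 0 A ->
  (forall t, 0 <= t + c -> 0 <= t -> eval K P E (t + c) t e v) ->
  vty (erase A) v -> pot A v = 0 -> sound_bound E [::] c 0 e v A.
Proof.
move=> wf ev vA pot0; apply: sound_bound_leaf wf ev _ => _.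
by split=> //; rewrite pot0 /potE big_nil; lra.
Qed.

Lemma sound_bound_var E x v A :
  lookup E x = Some v -> jwf [:: (x, A)] (Kvar K) 0 A ->
  sound_bound E [:: (x, A)] (Kvar K) 0 (EVar x) v A.
Proof.
move=> xv wf; apply: sound_bound_leaf wf (fun t h1 h2 => Ev_var P h1 h2 xv) _ => EG.
split; first exact: env_typed_lookup EG xv.
by rewrite (potE_cons _ _ xv) /potE big_nil; lra.
Qed.

Lemma sound_bound_op E o x1 x2 v1 v2 v A1 A :
  jwf [:: (x1, A1); (x2, A1)] (Kop K) 0 A ->
  lookup E x1 = Some v1 -> lookup E x2 = Some v2 -> op_sem o v1 v2 = Some v ->
  (vty (erase A1) v1 -> vty (erase A1) v2 -> vty (erase A) v) -> pot A v = 0 ->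
  sound_bound E [:: (x1, A1); (x2, A1)] (Kop K) 0 (EOp o x1 x2) v A.
Proof.
move=> wf x1v x2v opv vA pot0; have [_ _ /andP[_ G_ge0] _] := wf.
apply: sound_bound_leaf wf (fun t h1 h2 => Ev_op P h1 h2 x1v x2v opv) _ => EG.
split.
  exact: vA (env_typed_lookup EG x1v) (env_typed_lookup (env_typed_behead EG) x2v).
by have := potE_ge0 E G_ge0; rewrite pot0; lra.
Qed.

Lemma sound_bound_pair E x1 x2 v1 v2 A1 A2 :
  lookup E x1 = Some v1 -> lookup E x2 = Some v2 ->
  jwf [:: (x1, A1); (x2, A2)] (Kpair K) 0 (APair A1 A2) ->
  sound_bound E [:: (x1, A1); (x2, A2)] (Kpair K) 0 (EPair x1 x2) (VPair v1 v2)
    (APair A1 A2).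
Proof.
move=> x1v x2v wf.
apply: sound_bound_leaf wf (fun t h1 h2 => Ev_pair P h1 h2 x1v x2v) _ => EG.
rewrite /= (env_typed_lookup EG x1v) (env_typed_lookup (env_typed_behead EG) x2v).
by rewrite (potE_cons _ _ x1v) (potE_cons _ _ x2v) /potE big_nil; split=> //; lra.
Qed.

Lemma sound_bound_cons E xh xt vh vs p A :
  lookup E xh = Some vh -> lookup E xt = Some (VList vs) ->
  jwf [:: (xh, A); (xt, AList p A)] (p + Kcons K) 0 (AList p A) ->
  sound_bound E [:: (xh, A); (xt, AList p A)] (p + Kcons K) 0 (ECons xh xt)
    (VList (vh :: vs)) (AList p A).
Proof.
move=> xhv xtv wf.
apply: sound_bound_leaf wf (fun t h1 h2 => Ev_cons P h1 h2 xhv xtv) _ => EG.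
have /= vsA := env_typed_lookup (env_typed_behead EG) xtv.
rewrite /= (env_typed_lookup EG xhv) vsA; split=> //.
rewrite (potE_cons _ _ xhv) (potE_cons _ _ xtv) /potE big_nil /= big_cons.
by rewrite -addn1 natrD mulrDl mul1r; lra.
Qed.

Lemma sound_bound_app E f x vx v ft :
  lookup E x = Some vx ->
  jwf [:: (x, farg ft)] (fq ft + Kapp K) (fq' ft) (fres ft) ->
  sound_bound (upd E (fparam (P f)) vx) [:: (fparam (P f), farg ft)]
    (fq ft) (fq' ft) (fbody (P f)) v (fres ft) ->
  sound_bound E [:: (x, farg ft)] (fq ft + Kapp K) (fq' ft) (EApp f x) v (fres ft).
Proof.
move=> xv wf H EG p r r_ge0 budget.
have p_ge0 := budget_ge0 wf r_ge0 budget.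
rewrite (potE_cons _ _ xv) /potE big_nil in budget.
have EG' : env_typed (upd E (fparam (P f)) vx) [:: (fparam (P f), farg ft)].
  by apply: env_typed_upd (env_typed_lookup EG xv) _ => // ? [].
have [|p' [ev bound vA]] := H EG' (p - Kapp K) r r_ge0.
  by rewrite potE_upd // /potE big_nil; lra.
have p'_ge0 := eval_ge0 ev.
exists p'; split=> //; rewrite -(subrK (Kapp K) p).
by apply: Ev_app xv ev; rewrite ?subrK.
Qed.

Lemma sound_bound_let E G G1 G2 q q1 q' x e1 e2 v1 v A1 A2 :
  jwf G q q' A2 -> Permutation G (G1 ++ G2) -> ctx_wf ((x, A1) :: G2) ->
  sound_bound E G1 (q - Klet K) q1 e1 v1 A1 ->
  sound_bound (upd E x v1) ((x, A1) :: G2) q1 q' e2 v A2 ->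
  sound_bound E G q q' (ELet x e1 e2) v A2.
Proof.
move=> wf GG12 /andP[/andP[xG2 _] /andP[_ G2_ge0]] H1 H2 EG p r r_ge0 budget.
have p_ge0 := budget_ge0 wf r_ge0 budget.
have [EG1 EG2] := env_typed_cat (env_typed_perm GG12 EG).
rewrite (potE_perm E GG12) potE_cat in budget.
have G2_pot := potE_ge0 E G2_ge0.
(* The potential of [G2] is kept as slack while [e1] is evaluated. *)
have [||p1 [ev1 bound1 v1A1]] := H1 EG1 (p - Klet K) (r + potE E G2); try lra.
have [|p' [ev2 bound2 vA2]] := H2 (env_typed_upd xG2 v1A1 EG2) p1 r r_ge0.
  by rewrite potE_upd //; lra.
by exists p'; split=> //; apply: Ev_let p_ge0 (eval_ge0 ev2) ev1 ev2.
Qed.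

Lemma sound_bound_if E G G0 q q' x b et ef v A :
  jwf G q q' A -> Permutation G ((x, ABool) :: G0) -> lookup E x = Some (VBool b) ->
  sound_bound E G0 (q - Kcond K) q' (if b then et else ef) v A ->
  sound_bound E G q q' (EIf x et ef) v A.
Proof.
move=> wf GG0 xb H EG p r r_ge0 budget.
have p_ge0 := budget_ge0 wf r_ge0 budget.
have EG' := env_typed_perm GG0 EG.
rewrite (potE_perm E GG0) (potE_cons _ _ xb) /= in budget.
have [|p' [ev bound vA]] := H (env_typed_behead EG') (p - Kcond K) r r_ge0; first lra.
exists p'; split=> //; case: b xb ev {H} => xb ev.
- exact: Ev_if_true p_ge0 (eval_ge0 ev) xb ev.
- exact: Ev_if_false p_ge0 (eval_ge0 ev) xb ev.
Qed.

Lemma sound_bound_matchP E G G0 q q' x x1 x2 e v1 v2 v A1 A2 A :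
  jwf G q q' A -> Permutation G ((x, APair A1 A2) :: G0) ->
  ctx_wf ((x1, A1) :: (x2, A2) :: G0) -> lookup E x = Some (VPair v1 v2) ->
  sound_bound (upd (upd E x1 v1) x2 v2) ((x1, A1) :: (x2, A2) :: G0)
    (q - KmatchP K) q' e v A ->
  sound_bound E G q q' (EMatchP x x1 x2 e) v A.
Proof.
move=> wf GG0 /andP[uniqG0 _] xv H EG p r r_ge0 budget.
have p_ge0 := budget_ge0 wf r_ge0 budget.
have EG' := env_typed_perm GG0 EG.
have /andP[v1A1 v2A2] : vty (erase A1) v1 && vty (erase A2) v2.
  exact: env_typed_lookup EG' xv.
rewrite (potE_perm E GG0) (potE_cons _ _ xv) /= in budget.
have EG'' := env_typed_upd2 uniqG0 (agree_on_refl E) v1A1 v2A2 (env_typed_behead EG').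
have [|p' [ev bound vA]] := H EG'' (p - KmatchP K) r r_ge0.
  by rewrite (potE_upd2 _ _ uniqG0 (agree_on_refl E)); lra.
by exists p'; split=> //; apply: Ev_matchP p_ge0 (eval_ge0 ev) xv ev.
Qed.

Lemma sound_bound_matchN E G G0 q q' x e1 xh xt e2 v p0 A B :
  jwf G q q' B -> Permutation G ((x, AList p0 A) :: G0) ->
  lookup E x = Some (VList [::]) ->
  sound_bound E G0 (q - KmatchN K) q' e1 v B ->
  sound_bound E G q q' (EMatchL x e1 xh xt e2) v B.
Proof.
move=> wf GG0 xv H EG p r r_ge0 budget.
have p_ge0 := budget_ge0 wf r_ge0 budget.
have EG' := env_typed_perm GG0 EG.
rewrite (potE_perm E GG0) (potE_cons _ _ xv) /= big_nil mulr0n mul0r in budget.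
have [|p' [ev bound vB]] := H (env_typed_behead EG') (p - KmatchN K) r r_ge0; first lra.
by exists p'; split=> //; apply: Ev_matchN p_ge0 (eval_ge0 ev) xv ev.
Qed.

Lemma sound_bound_matchL E G G0 q q' x e1 xh xt e2 vh vs v p0 A B :
  jwf G q q' B -> Permutation G ((x, AList p0 A) :: G0) ->
  ctx_wf ((xh, A) :: (xt, AList p0 A) :: G0) ->
  lookup E x = Some (VList (vh :: vs)) ->
  sound_bound (upd (upd E xh vh) xt (VList vs)) ((xh, A) :: (xt, AList p0 A) :: G0)
    (q + p0 - KmatchL K) q' e2 v B ->
  sound_bound E G q q' (EMatchL x e1 xh xt e2) v B.
Proof.
move=> wf GG0 /andP[uniqG0 _] xv H EG p r r_ge0 budget.
have p_ge0 := budget_ge0 wf r_ge0 budget.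
have EG' := env_typed_perm GG0 EG.
have /andP[vhA vsA] : vty (erase A) vh && vty (erase (AList p0 A)) (VList vs).
  exact: env_typed_lookup EG' xv.
rewrite (potE_perm E GG0) (potE_cons _ _ xv) /= big_cons in budget.
rewrite -addn1 natrD mulrDl mul1r in budget.
have EG'' := env_typed_upd2 uniqG0 (agree_on_refl E) vhA vsA
  (env_typed_behead EG').
have [|p' [ev bound vB]] := H EG'' (p - KmatchL K) r r_ge0.
  by rewrite (potE_upd2 _ _ uniqG0 (agree_on_refl E)) /=; lra.
by exists p'; split=> //; apply: Ev_matchL p_ge0 (eval_ge0 ev) xv ev.
Qed.

Lemma sound_bound_share E G G0 q q' x x1 x2 e w v A A1 A2 B :
  jwf G q q' B -> Permutation G ((x, A) :: G0) -> share_rel A A1 A2 ->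
  ctx_wf ((x1, A1) :: (x2, A2) :: G0) -> lookup E x = Some w ->
  sound_bound (upd (upd (rem_var E x) x1 w) x2 w) ((x1, A1) :: (x2, A2) :: G0)
    q q' e v B ->
  sound_bound E G q q' (EShare x x1 x2 e) v B.
Proof.
move=> wf GG0 sh /andP[uniqG0 _] xw H EG p r r_ge0 budget.
have p_ge0 := budget_ge0 wf r_ge0 budget.
have EG' := env_typed_perm GG0 EG.
have wA := env_typed_lookup EG' xw.
have [eA1 eA2] := erase_share sh.
have xG0 : x \notin map fst G0.
  case: wf => _ _ /andP[+ _] _.
  by rewrite (perm_uniq (Permutation_perm_eq (Permutation_map fst GG0))) => /andP[].
have agr := agree_on_rem_var E xG0.
rewrite (potE_perm E GG0) (potE_cons _ _ xw) (pot_share w sh) in budget.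
have EG'' : env_typed (upd (upd (rem_var E x) x1 w) x2 w) ((x1, A1) :: (x2, A2) :: G0).
  by apply: env_typed_upd2 uniqG0 agr _ _ (env_typed_behead EG'); rewrite ?eA1 ?eA2.
have [|p' [ev bound vB]] := H EG'' p r r_ge0.
  by rewrite (potE_upd2 _ _ uniqG0 agr); lra.
by exists p'; split=> //; apply: Ev_share p_ge0 (eval_ge0 ev) xw ev.
Qed.

Ltac typ_structural :=
  first
  [ by intros; discriminate
  | by intros ? ? ? ? ? ? ? _ _ IHty pq slack ee;
       exact: sound_bound_relax (IHty ee) pq slack
  | by intros ? ? ? ? ? ? ? ? [_ _ wf _] GG0 _ IHty ee;
       exact: sound_bound_weaken wf GG0 (IHty ee)
  | by intros ? ? ? ? ? ? _ _ IHty BA ee; exact: sound_bound_subty (IHty ee) BA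
  | by intros ? ? ? ? ? ? ? ? ? _ GG0 _ IHty BA ee;
       exact: sound_bound_supty GG0 BA (IHty ee) ].

Hypothesis HP : prog_typed K P S.

Lemma eval_sound E p p' e v : eval K P E p p' e v ->
  forall G q q' e' A, typ K S G q q' e' A -> e' = e -> sound_bound E G q q' e v A.
Proof.
elim=> {E p p' e v}
  [E t _ _|E t _ _|E t _ _|E t n _ _|E t _ _
  |E t x v _ _ xv
  |E t o x1 x2 v1 v2 v _ _ x1v x2v opv
  |E t x1 x2 v1 v2 _ _ x1v x2v
  |E t xh xt vh vs _ _ xhv xtv
  |E t t' f x vx v _ _ xv _ IH
  |E t t1 t' x e1 e2 v1 v _ _ _ IH1 _ IH2
  |E t t' x et ef v _ _ xb _ IH
  |E t t' x et ef v _ _ xb _ IH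
  |E t t' x x1 x2 e v1 v2 v _ _ xv _ IH
  |E t t' x e1 xh xt e2 v _ _ xv _ IH
  |E t t' x e1 xh xt e2 vh vs v _ _ xv _ IH
  |E t t' x x1 x2 e w v _ _ xw _ IH]
  ? ? ? ? ?; elim; try typ_structural.
- by move=> wf _; apply: sound_bound_const wf (Ev_unit P E) _ _.
- by move=> wf _; apply: sound_bound_const wf (Ev_true P E) _ _.
- by move=> wf _; apply: sound_bound_const wf (Ev_false P E) _ _.
- by move=> m wf _; apply: sound_bound_const wf (fun t => @Ev_int K P E t n) _ _.
- move=> p0 A wf _; apply: sound_bound_const wf (Ev_nil P E) _ _ => //=.
  by rewrite big_nil mulr0n mul0r addr0.
- by move=> y A wf [?]; subst; exact: sound_bound_var xv wf.
- move=> o' y1 y2 bo wf [???]; subst.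
  by apply: sound_bound_op wf x1v x2v opv (bool_op_vty bo opv) _.
- move=> o' y1 y2 co wf [???]; subst.
  by apply: sound_bound_op wf x1v x2v opv (cmp_op_vty co opv) _.
- move=> o' y1 y2 ao wf [???]; subst.
  by apply: sound_bound_op wf x1v x2v opv (arith_op_vty ao opv) _.
- by move=> y1 y2 A1 A2 wf [??]; subst; exact: sound_bound_pair x1v x2v wf.
- by move=> y1 y2 p0 A wf [??]; subst; exact: sound_bound_cons xhv xtv wf.
- move=> f' y ft Sft wf [??]; subst.
  exact: sound_bound_app xv wf (IH _ _ _ _ _ (HP Sft) erefl).
- move=> G G1 G2 q q1 q' y d1 d2 A1 A2 wf GG12 ty1 _ ty2 _ [???]; subst.
  exact: sound_bound_let wf GG12 (typ_ctx_wf ty2) (IH1 _ _ _ _ _ ty1 erefl)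
    (IH2 _ _ _ _ _ ty2 erefl).
- move=> G G0 q q' y d1 d2 A wf GG0 ty1 _ _ _ [???]; subst.
  exact: sound_bound_if wf GG0 xb (IH _ _ _ _ _ ty1 erefl).
- move=> G G0 q q' y d1 d2 A wf GG0 _ _ ty2 _ [???]; subst.
  exact: sound_bound_if wf GG0 xb (IH _ _ _ _ _ ty2 erefl).
- move=> G G0 q q' y y1 y2 d A1 A2 A wf GG0 ty _ [????]; subst.
  exact: sound_bound_matchP wf GG0 (typ_ctx_wf ty) xv (IH _ _ _ _ _ ty erefl).
- move=> G G0 q q' y d1 yh yt d2 p0 A B wf GG0 ty1 _ _ _ [?????]; subst.
  exact: sound_bound_matchN wf GG0 xv (IH _ _ _ _ _ ty1 erefl).
- move=> G G0 q q' y d1 yh yt d2 p0 A B wf GG0 _ _ ty2 _ [?????]; subst.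
  exact: sound_bound_matchL wf GG0 (typ_ctx_wf ty2) xv (IH _ _ _ _ _ ty2 erefl).
- move=> G G0 q q' y y1 y2 d A A1 A2 B wf GG0 ty _ sh [????]; subst.
  exact: sound_bound_share wf GG0 sh (typ_ctx_wf ty) xw (IH _ _ _ _ _ ty erefl).
Qed.

End Soundness.

Unset Implicit Arguments.

Theorem theorem4 (K : costs) (P : prog) (S : signature) :
  sig_wf S -> prog_typed K P S ->
  forall (E : env) (G : ctx) (e : expr) (v : value) (q q' : rat) (A : aty),
    env_typed E G ->
    evaluates K P E e v ->
    typ K S G q q' e A ->
    forall p r : rat, 0 <= p -> 0 <= r -> q + potE E G + r <= p ->
    exists p' : rat, 0 <= p' /\ eval K P E p p' e v /\ q' + pot A v + r <= p'.
Proof.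
move=> _ HP E G e v q q' A EG [p0 [p0' ev]] ty p r _ r_ge0 budget.
have [p' [ev' bound _]] := eval_sound HP ev ty erefl EG r_ge0 budget.
by exists p'; split=> //; exact: eval_ge0 ev'.
Qed.
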